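(* Let $\lambda$ be a composition of $n\ge 2$. For each $1\le k\le n$ and each $\sigma\in\Omega_\lambda$, almost surely $$\sigma_{\tilde U_\lambda}\big(\xi_1(\sigma),\dots,\xi_k(\sigma)\big)=\sigma_{\downarrow k}.$$ In particular, if $\sigma_\lambda$ is uniform on $\Omega_\lambda$, the random permutations $(\sigma_\lambda)_{\downarrow k}$ and $\sigma_{\tilde U_\lambda}(\xi^\lambda_1,\dots,\xi^\lambda_k)$ have the same law.
   Context: A composition $\lambda=(\lambda_1,\dots,\lambda_r)$ of $n$ has descent set $D_\lambda=\{\lambda_1,\lambda_1+\lambda_2,\dots,\lambda_1+\dots+\lambda_{r-1}\}$. $\Omega_\lambda=\{\sigma\in\mathfrak{S}_n: des(\sigma)=D_\lambda\}$ where $des(\sigma)=\{i:\sigma(i+1)<\sigma(i)\}$ (permutations written as words). For $\sigma\in\mathfrak{S}_n$, $\sigma_{\downarrow k}\in\mathfrak{S}_k$ is the word obtained by erasing the letters $k+1,\dots,n$. Peaks/valleys: $i\in[1,n]$ is a peak if $i\in D_\lambda\cup\{n\}$ and $i-1\notin D_\lambda$; a valley if $i\notin D_\lambda$ and $i-1\in D_\lambda\cup\{0\}$. Let $1=a_1<a_2<\dots<a_{t+1}=n$ be the peaks and valleys. The slope $\mathfrak{s}(i)=[x(i),y(i)]$ of a cell $i$ is the maximal integer subinterval of $[1,n]$ containing $i$ and no peak or valley other than $i$ itself. Averaged coordinates: given $\sigma\in\Omega_\lambda$, let $\xi_1(\sigma),\dots,\xi_n(\sigma)$ be independent, with $\xi_i(\sigma)$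 uniform on $[\frac{x(\sigma^{-1}(i))-1}{n},\frac{y(\sigma^{-1}(i))}{n}]$. With $\sigma_\lambda$ uniform on $\Omega_\lambda$, $\xi^\lambda_i=\xi_i(\sigma_\lambda)$ (the uniform variables drawn independently of $\sigma_\lambda$). Run paintbox: $\tilde U_\lambda=(\tilde U_\uparrow(\lambda),\tilde U_\downarrow(\lambda))$ with $\tilde U_\uparrow(\lambda)=\bigcup_{a_i\text{ valley}}]\frac{a_i-1}{n},\frac{a_{i+1}-1}{n}[$, $\tilde U_\downarrow(\lambda)=\bigcup_{a_i\text{ peak}}]\frac{a_i-1}{n},\frac{a_{i+1}-1}{n}[$, with the convention $a_{i+1}=n+1$ when $a_i=n$. Paintbox: for a pair $U=(U_\uparrow,U_\downarrow)$ of disjoint open subsets of $]0,1[$ and $x_1,\dots,x_k\in[0,1]$, $\sigma_U(x_1,\dots,x_k)\in\mathfrak{S}_k$ is defined by $\sigma^{-1}(i)<\sigma^{-1}(j)$ iff ($x_i,x_j$ not in a common component of $U_\uparrow$ or of $U_\downarrow$ and $x_i<x_j$) or (same component of $U_\uparrow$ and $i<j$) or (same component of $U_\downarrow$ and $j<i$). *)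

From HB Require Import structures.
From mathcomp Require Import all_boot all_order all_algebra all_fingroup.
From mathcomp Require Import all_classical all_reals all_analysis.
Set Implicit Arguments. Unset Strict Implicit. Unset Printing Implicit Defensive.
Import Order.TTheory GRing.Theory Num.Theory numFieldNormedType.Exports.
Local Open Scope classical_set_scope.
Local Open Scope ring_scope.

(* ---------- Combinatorics (everything 1-based, as in the paper) ---------- *)

Definition is_composition (lam : seq nat) (n : nat) : bool :=
  all (fun p => 0 < p)%N lam && (sumn lam == n).

(* D_lam = {lam_1, lam_1+lam_2, ..., lam_1+...+lam_{r-1}} *)
Definition descent_set (lam : seq nat) : seq nat :=
  [seq sumn (take i lam) | i <- iota 1 (size lam).-1].

(* a permutation s of [1,n] written as a word s(1) s(2) ... s(n), letters 1..n
   (s : 'S_n acts on 'I_n = {0..n-1}; letter = value + 1) *)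
Definition word n (s : 'S_n) : seq nat := [seq (s i).+1 | i <- enum 'I_n].

(* s(p) for a 1-based position p *)
Definition wval n (s : 'S_n) (p : nat) : nat := nth 0%N (word s) p.-1.

(* 1-based position of letter a, i.e. s^{-1}(a) *)
Definition wpos n (s : 'S_n) (a : nat) : nat := (index a (word s)).+1.

Definition is_descent n (s : 'S_n) (i : nat) : bool :=
  [&& (0 < i)%N, (i < n)%N & (wval s i.+1 < wval s i)%N].

Definition Omega (n : nat) (lam : seq nat) : {set 'S_n} :=
  [set s : 'S_n | [forall i : 'I_n.+1, ((i : nat) \in descent_set lam) == is_descent s i]].

Definition is_peak (lam : seq nat) (n i : nat) : bool :=
  [&& (1 <= i <= n)%N, (i \in descent_set lam) || (i == n) & (i.-1 \notin descent_set lam)].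
Definition is_valley (lam : seq nat) (n i : nat) : bool :=
  [&& (1 <= i <= n)%N, (i \notin descent_set lam) & (i.-1 \in descent_set lam) || (i.-1 == 0)%N].
Definition is_extremal (lam : seq nat) (n i : nat) : bool :=
  is_peak lam n i || is_valley lam n i.

(* slope s(i) = [x(i), y(i)] : the maximal integer interval of [1,n] containing i
   and no peak/valley other than i.  Its left end is 1 + (largest peak/valley < i)
   (1 if there is none), its right end is (smallest peak/valley > i) - 1 (n if none). *)
Definition slope_x (lam : seq nat) (n i : nat) : nat :=
  (\max_(0 <= j < i | is_extremal lam n j) j).+1.
Definition slope_y (lam : seq nat) (n i : nat) : nat :=
  (\big[minn/n.+1]_(i.+1 <= j < n.+1 | is_extremal lam n j) j).-1.

(* next peak/valley after a, with the convention n+1 after n *)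
Definition next_ext (lam : seq nat) (n a : nat) : nat :=
  \big[minn/n.+1]_(a.+1 <= j < n.+1 | is_extremal lam n j) j.

Section Paintbox.
Variable R : realType.

Definition U_up (lam : seq nat) (n : nat) : set R :=
  \bigcup_(a in [set a : nat | is_valley lam n a])
    [set t : R | ((a%:R - 1) / n%:R < t) && (t < ((next_ext lam n a)%:R - 1) / n%:R)].
Definition U_down (lam : seq nat) (n : nat) : set R :=
  \bigcup_(a in [set a : nat | is_peak lam n a])
    [set t : R | ((a%:R - 1) / n%:R < t) && (t < ((next_ext lam n a)%:R - 1) / n%:R)].

Definition same_comp (A : set R) (u v : R) : Prop := connected_component A u v.

(* sigma_U(x_1,...,x_k) = tau  (x given 1-based): tau^{-1}(i) < tau^{-1}(j) iff ... *)
Definition paintbox_is (Uup Udn : set R) (k : nat) (x : nat -> R) (tau : 'S_k) : Prop :=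
  forall i j : nat, (1 <= i <= k)%N -> (1 <= j <= k)%N ->
    ((wpos tau i < wpos tau j)%N <->
     [\/ [/\ ~ same_comp Uup (x i) (x j), ~ same_comp Udn (x i) (x j) & x i < x j],
         same_comp Uup (x i) (x j) /\ (i < j)%N
       | same_comp Udn (x i) (x j) /\ (j < i)%N]).
End Paintbox.

(* tau = s_{\downarrow k} : erase the letters k+1..n from the word of s *)
Definition restr_is (n k : nat) (s : 'S_n) (tau : 'S_k) : bool :=
  word tau == [seq a <- word s | (a <= k)%N].

Section Prob.
Context {R : realType} {d : measure_display} {T : measurableType d}.

Definition is_uniform (P : probability T R) (X : T -> R) (a b : R) : Prop :=
  measurable_fun setT X /\
  forall A : set R, measurable A ->
    P (X @^-1` A) = (lebesgue_measure (A `&` [set t : R | (a <= t <= b)%R]) * ((b - a)^-1)%:E)%E.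

Definition mutually_independent (n : nat) (P : probability T R) (X : 'I_n -> T -> R) : Prop :=
  forall A : 'I_n -> set R, (forall i, measurable (A i)) ->
    P (\bigcap_(i in [set: 'I_n]) (X i @^-1` A i)) = (\prod_(i < n) P (X i @^-1` A i))%E.

(* value of the family at letter a (1-based): X_a = X (a-1) *)
Definition xat (n : nat) (X : 'I_n -> T -> R) (t : T) (a : nat) : R :=
  oapp (fun o : 'I_n => X o t) 0 (insub a.-1 : option 'I_n).

Definition averaged_coords (lam : seq nat) (n : nat) (s : 'S_n)
    (P : probability T R) (X : 'I_n -> T -> R) : Prop :=
  mutually_independent P X /\
  forall i : 'I_n,
    is_uniform P (X i)
      (((slope_x lam n (wpos s i.+1))%:R - 1) / n%:R)
      ((slope_y lam n (wpos s i.+1))%:R / n%:R).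
End Prob.

From HB Require Import structures.
From mathcomp Require Import all_boot all_order all_algebra all_fingroup.
From mathcomp Require Import all_classical all_reals all_analysis.
Import Order.TTheory GRing.Theory Num.Theory numFieldNormedType.Exports.
Set Implicit Arguments. Unset Strict Implicit. Unset Printing Implicit Defensive.

(* For s in Omega_lam the word s increases along every ascending run of lam
   (from a valley to the next peak/valley) and decreases along every descending
   run, because the descent set of s is D_lam.  The components of the run
   paintbox are the open intervals ](a-1)/n, (a'-1)/n[ attached to these runs.
   Almost surely each xi_i(s) avoids the grid (1/n)N, so it lies strictly inside
   a cell ](c-1)/n, c/n[ with c in the slope of the position p of i; the run
   containing c also contains p (possibly as its right end).  Hence xi_i and xi_j
   share a component iff p and q lie in a common run, and then the paintbox
   compares i and j exactly as s does along that monotone run; otherwise it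
   compares xi_i and xi_j, i.e. the runs, i.e. the positions.  Erasing the
   letters > k keeps relative positions, so the paintbox returns s restricted
   to [1,k] almost surely, and the law
   identity follows by averaging these 0/1 probabilities over Omega_lam. *)

Lemma geq_bigminn_seq (x0 : nat) (r : seq nat) (P : pred nat) b :
  b \in r -> P b -> \big[minn/x0]_(j <- r | P j) j <= b.
Proof.
elim: r => //= y r IH; rewrite in_cons big_cons => /orP[/eqP<-|br] Pb.
  by rewrite Pb geq_minl.
by case: (P y); rewrite ?geq_min IH ?orbT.
Qed.

Lemma leq_bigminn (x0 m : nat) (r : seq nat) (P : pred nat) :
  m <= x0 -> (forall j, j \in r -> P j -> m <= j) ->
  m <= \big[minn/x0]_(j <- r | P j) j.
Proof.
move=> m_x0 m_r; rewrite big_seq_cond.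
elim/big_ind: _ => // [i j|j /andP[]]; last exact: m_r.
by rewrite leq_min => -> ->.
Qed.

Lemma bigminn_idx_or_mem (x0 : nat) (r : seq nat) (P : pred nat) :
  let m := \big[minn/x0]_(j <- r | P j) j in m = x0 \/ m \in r /\ P m.
Proof.
rewrite big_seq_cond; elim/big_ind: _ => [|i j|j /andP[]]; [by left | | by right].
by rewrite /minn; case: ltnP.
Qed.

Section Runs.
Variables (n : nat) (lam : seq nat).
Hypotheses (n_ge2 : 2 <= n) (lam_comp : is_composition lam n).

Local Notation D := (descent_set lam).
Local Notation ext := (is_extremal lam n).
Local Notation next := (next_ext lam n).

Definition in_run (a c : nat) : bool := [&& ext a, a <= c & c < next a].

Lemma descent_set_gt0 p : p \in D -> 0 < p.
Proof.
case/andP: lam_comp => /allP lam_gt0 _ /mapP[[|i]]; rewrite mem_iota // => /andP[_ i_lt] ->.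
by case: (lam) lam_gt0 i_lt => [|x l] lam_gt0 //= _; rewrite addn_gt0 lam_gt0 ?mem_head.
Qed.

Lemma extremal1 : ext 1.
Proof.
have D0 : 0 \notin D by apply/negP => /descent_set_gt0.
rewrite /is_extremal /is_peak /is_valley /= (negbTE D0) (leq_trans _ n_ge2) //=.
by case: (1 \in D); rewrite ?orbT.
Qed.

Lemma extremal_range a : ext a -> 1 <= a <= n.
Proof. by case/orP => /andP[]. Qed.

Lemma peak_not_valley a : is_peak lam n a -> ~~ is_valley lam n a.
Proof.
case/and3P => _ /orP[aD|/eqP ->] a'D; apply/and3P => -[_ aD' a'D']; first by rewrite aD in aD'.
by rewrite (negbTE a'D) /= -subn1 subn_eq0 leqNgt n_ge2 in a'D'.
Qed.

Lemma next_ext_gt a : a <= n -> a < next a.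
Proof. by move=> a_le; apply: leq_bigminn => // j; rewrite mem_index_iota => /andP[]. Qed.

Lemma next_ext_le a : next a <= n.+1.
Proof.
rewrite /next_ext; case: (bigminn_idx_or_mem n.+1 (index_iota a.+1 n.+1) ext) => [->//|[]].
by rewrite mem_index_iota => /andP[_ /ltnW].
Qed.

Lemma next_ext_min a b : ext b -> a < b -> b <= n -> next a <= b.
Proof. by move=> eb ab bn; apply: geq_bigminn_seq => //; rewrite mem_index_iota ab. Qed.

Lemma next_extremal a : next a <= n -> ext (next a).
Proof.
rewrite /next_ext.
by case: (bigminn_idx_or_mem n.+1 (index_iota a.+1 n.+1) ext) => [->|[]//]; rewrite ltnn.
Qed.

Lemma slope_x_gt b p : ext b -> b < p -> b < slope_x lam n p.
Proof. by move=> eb bp; rewrite ltnS leq_bigmax_seq // mem_index_iota. Qed.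

Lemma slope_y_le p : slope_y lam n p <= n.
Proof.
have -> : slope_y lam n p = (next p).-1 by [].
by have := next_ext_le p; case: (next p).
Qed.

Lemma run_exists c : 1 <= c <= n -> exists a, in_run a c.
Proof.
elim: c => // -[_ _|c IH /andP[_ c_lt]].
  by exists 1; rewrite /in_run extremal1 leqnn next_ext_gt // ltnW.
have [a /and3P[ea ac c_next]] := IH (ltnW c_lt).
case: (ltnP c.+2 (next a)) => [c_lt_next|next_le].
  by exists a; rewrite /in_run ea (leq_trans ac) ?c_lt_next.
have next_eq : next a = c.+2 by apply/eqP; rewrite eqn_leq next_le c_next.
by exists c.+2; rewrite /in_run leqnn next_ext_gt // andbT -next_eq next_extremal // next_eq.
Qed.

Lemma run_unique a a' c : in_run a c -> in_run a' c -> c <= n -> a = a'.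
Proof.
move=> /and3P[ea ac c_next] /and3P[ea' a'c c_next'] cn.
case: (ltngtP a a') => // lt.
  by have := next_ext_min ea' lt (leq_trans a'c cn); rewrite leqNgt (leq_ltn_trans a'c).
by have := next_ext_min ea lt (leq_trans ac cn); rewrite leqNgt (leq_ltn_trans ac).
Qed.

Lemma in_run_ltn a b c d p q :
  in_run a c -> in_run b d -> a < b -> p <= next a -> b <= q -> (c < d) && (p <= q).
Proof.
move=> /and3P[_ _ c_next] /and3P[eb bd _] ab p_next bq.
have next_le : next a <= b by apply: (next_ext_min eb ab); case/andP: (extremal_range eb).
by rewrite (leq_trans c_next (leq_trans next_le bd)) (leq_trans p_next (leq_trans next_le bq)).
Qed.

Lemma run_not_extremal a c : a < c -> c < next a -> c <= n -> ~~ ext c.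
Proof. by move=> ac c_next cn; apply/negP => /next_ext_min/(_ ac cn); rewrite leqNgt c_next. Qed.

Lemma valley_run_ascent a p :
  is_valley lam n a -> a <= p -> p < next a -> p < n -> p \notin D.
Proof.
move=> va; elim: p => [|p IH] ap p_next pn; first by apply/negP => /descent_set_gt0.
case: (ltngtP a p.+1) ap => [ap _|//|<- _]; last by case/and3P: va.
have pD : p \notin D by apply: IH => //; exact: ltnW.
have := run_not_extremal ap p_next (ltnW pn).
by rewrite /is_extremal /is_peak negb_or /= pD (ltn_eqF pn) ltnW //= orbF andbT => /andP[].
Qed.

Lemma peak_run_descent a p :
  is_peak lam n a -> a <= p -> p < next a -> p < n -> p \in D.
Proof.
move=> pa; elim: p => [|p IH] ap p_next pn.
  by case/and3P: pa => /andP[a1 _] _ _; move: (leq_trans a1 ap).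
case: (ltngtP a p.+1) ap => [ap _|//|e _]; last first.
  case/and3P: pa => _ /orP[aD|/eqP an] _; first by rewrite -e.
  by rewrite -e an ltnn in pn.
have pD : p \in D by apply: IH => //; exact: ltnW.
have := run_not_extremal ap p_next (ltnW pn).
by rewrite /is_extremal /is_valley negb_or /= pD ltnW //= andbT negbK => /andP[].
Qed.

End Runs.

Section Words.
Variables (n : nat) (s : 'S_n).

Lemma size_word : size (word s) = n.
Proof. by rewrite size_map size_enum_ord. Qed.

Lemma word_uniq : uniq (word s).
Proof. by rewrite map_inj_uniq ?enum_uniq // => i j [] /val_inj/perm_inj. Qed.

Lemma mem_word a : (a \in word s) = (1 <= a <= n).
Proof.
apply/mapP/idP => [[i _ ->]|]; first by rewrite /= ltn_ord.
case: a => // a /= a_lt; exists ((s^-1)%g (Ordinal a_lt)); first by rewrite mem_enum.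
by rewrite permKV.
Qed.

Lemma wval_wpos a : 1 <= a <= n -> wval s (wpos s a) = a.
Proof. by rewrite -mem_word => a_s; rewrite /wval /wpos /= nth_index. Qed.

Lemma wpos_wval p : 1 <= p <= n -> wpos s (wval s p) = p.
Proof. by case: p => // p /= p_lt; rewrite /wpos index_uniq ?size_word ?word_uniq. Qed.

Lemma wpos_range a : 1 <= a <= n -> 1 <= wpos s a <= n.
Proof. by rewrite -mem_word -index_mem size_word. Qed.

Lemma wpos_inj a b : 1 <= a <= n -> 1 <= b <= n -> wpos s a = wpos s b -> a = b.
Proof. by move=> a_in b_in e; rewrite -(wval_wpos a_in) -(wval_wpos b_in) e. Qed.

Lemma wval_inj p q : 1 <= p <= n -> 1 <= q <= n -> wval s p = wval s q -> p = q.
Proof. by move=> p_in q_in e; rewrite -(wpos_wval p_in) -(wpos_wval q_in) e. Qed.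

End Words.

Section OmegaRuns.
Variables (n : nat) (lam : seq nat) (s : 'S_n).
Hypotheses (lam_comp : is_composition lam n) (s_Omega : s \in Omega n lam).

Local Notation D := (descent_set lam).
Local Notation next := (next_ext lam n).

Lemma Omega_descentE p : 1 <= p -> p < n -> (p \in D) = (wval s p.+1 < wval s p).
Proof.
move=> p_ge1 p_lt; have p_ord : p < n.+1 by rewrite ltnW.
move: s_Omega; rewrite inE => /forallP/(_ (Ordinal p_ord))/eqP ->.
by rewrite /is_descent p_ge1 p_lt.
Qed.

Lemma Omega_ascent p : 1 <= p -> p < n -> p \notin D -> wval s p < wval s p.+1.
Proof.
move=> p_ge1 p_lt; rewrite Omega_descentE // -leqNgt leq_eqVlt => /orP[/eqP e|//].
have p_in : 1 <= p <= n by rewrite p_ge1 ltnW.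
by have /eqP := @wval_inj _ s _ p.+1 p_in p_lt e; rewrite eqn_leq ltnn andbF.
Qed.

Lemma valley_run_increasing a p q : is_valley lam n a ->
  a <= p -> p < q -> q <= next a -> q <= n -> wval s p < wval s q.
Proof.
move=> va ap; have a_ge1 : 1 <= a by case/and3P: va => /andP[].
elim: q => // q IH pq q_next qn.
have step : wval s q < wval s q.+1.
  apply: Omega_ascent => //; first by rewrite (leq_trans a_ge1) // (leq_trans ap).
  exact: (valley_run_ascent lam_comp va) (leq_trans ap _) q_next qn.
move: pq; rewrite ltnS leq_eqVlt => /orP[/eqP->//|pq].
by apply: ltn_trans step; apply: IH => //; exact: ltnW.
Qed.

Lemma peak_run_decreasing a p q : is_peak lam n a ->
  a <= p -> p < q -> q <= next a -> q <= n -> wval s q < wval s p.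
Proof.
move=> pa ap; have a_ge1 : 1 <= a by case/and3P: pa => /andP[].
elim: q => // q IH pq q_next qn.
have step : wval s q.+1 < wval s q.
  rewrite -Omega_descentE //; first exact: (peak_run_descent pa) (leq_trans ap _) q_next qn.
  by rewrite (leq_trans a_ge1) // (leq_trans ap).
move: pq; rewrite ltnS leq_eqVlt => /orP[/eqP->//|pq].
by apply: ltn_trans step _; apply: IH => //; exact: ltnW.
Qed.

Lemma valley_run_ltE a p q : is_valley lam n a -> a <= p -> a <= q ->
  p <= next a -> q <= next a -> p <= n -> q <= n ->
  (p < q) = (wval s p < wval s q).
Proof.
move=> va ap aq p_next q_next pn qn; case: (ltngtP p q) => [pq|qp|->]; last by rewrite ltnn.
  by rewrite (valley_run_increasing va ap pq q_next qn).
by apply/esym/negbTE; rewrite -leqNgt ltnW // (valley_run_increasing va aq qp p_next pn).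
Qed.

Lemma peak_run_ltE a p q : is_peak lam n a -> a <= p -> a <= q ->
  p <= next a -> q <= next a -> p <= n -> q <= n ->
  (p < q) = (wval s q < wval s p).
Proof.
move=> pa ap aq p_next q_next pn qn; case: (ltngtP p q) => [pq|qp|->]; last by rewrite ltnn.
  by rewrite (peak_run_decreasing pa ap pq q_next qn).
by apply/esym/negbTE; rewrite -leqNgt ltnW // (peak_run_decreasing pa aq qp p_next pn).
Qed.

End OmegaRuns.

Lemma restr_exists n k (s : 'S_n) : k <= n ->
  exists tau : 'S_k, word tau = [seq a <- word s | a <= k].
Proof.
move=> k_le; set w := [seq a <- word s | a <= k].
have w_uniq : uniq w by rewrite filter_uniq // word_uniq.
have mem_w a : (a \in w) = (1 <= a <= k).
  rewrite mem_filter mem_word; case: a => //= a; case: (ltnP a k) => //= a_lt.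
  by rewrite (leq_trans a_lt k_le).
have size_w : size w = k.
  have w_iota : perm_eq w (iota 1 k).
    by apply: uniq_perm => // [|a]; rewrite ?iota_uniq // mem_w mem_iota add1n ltnS.
  by rewrite (perm_size w_iota) size_iota.
have nth_w (i : 'I_k) : 1 <= nth 0 w i <= k by rewrite -mem_w mem_nth // size_w.
pose g (i : 'I_k) : 'I_k := insubd i (nth 0 w i).-1.
have val_g i : val (g i) = (nth 0 w i).-1.
  by rewrite val_insubd; case/andP: (nth_w i); case: (nth 0 w i) => // m _ ->.
have g_inj : injective g.
  move=> i j /(congr1 val); rewrite !val_g.
  have := nth_w i; have := nth_w j.
  case Ei: (nth 0 w i) => [|a]; case Ej: (nth 0 w j) => [|b] //= _ _ ab.
  by apply/val_inj/eqP; rewrite -(nth_uniq 0 _ _ w_uniq) ?size_w ?ltn_ord // Ei Ej ab.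
exists (perm g_inj).
rewrite /word (eq_map (g := fun i : 'I_k => nth 0 w i)); last first.
  by move=> i; rewrite permE val_g; case/andP: (nth_w i); case: (nth 0 w i).
by rewrite -[in RHS](mkseq_nth 0 w) size_w /mkseq -val_enum_ord -map_comp.
Qed.

Lemma ltn_index_filter (T : eqType) (P : pred T) (s : seq T) x y :
  x \in s -> y \in s -> P x -> P y ->
  (index x [seq z <- s | P z] < index y [seq z <- s | P z]) = (index x s < index y s).
Proof.
move=> + + Px Py; elim: s => //= z s IH; rewrite !in_cons.
case: (eqVneq z x) => [-> _ _|zx]; first by rewrite Px /= eqxx; case: eqVneq.
case: (eqVneq z y) zx => [-> zx _ _|zy zx xs ys]; first by rewrite Py /= eqxx (negbTE zx) ltn0.
by case: (P z); rewrite /= ?(negbTE zx) ?(negbTE zy) ?ltnS IH.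
Qed.

Lemma restr_wpos_ltE n k (s : 'S_n) (tau : 'S_k) i j : k <= n ->
  word tau = [seq a <- word s | a <= k] -> 1 <= i <= k -> 1 <= j <= k ->
  (wpos tau i < wpos tau j) = (wpos s i < wpos s j).
Proof.
move=> k_le w_tau /andP[i_ge1 i_le] /andP[j_ge1 j_le].
by rewrite /wpos !ltnS w_tau ltn_index_filter // mem_word ?i_ge1 ?j_ge1 (leq_trans _ k_le).
Qed.

Lemma word_inj k : injective (@word k).
Proof.
move=> tau tau' /eq_in_map e; apply/permP => i.
by have /(_ (mem_enum _ i))[/val_inj] := e i.
Qed.

Lemma wpos_ord k (tau : 'S_k) (o : 'I_k) : wpos tau o.+1 = ((tau^-1)%g o).+1.
Proof.
rewrite /wpos /word -[in LHS](permKV tau o).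
rewrite (index_map (f := fun i : 'I_k => (tau i).+1)) ?index_enum_ord //.
by move=> x y [/val_inj/perm_inj].
Qed.

Lemma leq_ord_mono k (g : 'I_k -> 'I_k) : {mono g : u v / u < v} -> forall u : 'I_k, u <= g u.
Proof.
move=> g_mono; suff H m (u : 'I_k) : val u = m -> m <= g u by move=> u; exact: H.
elim: m u => // m IH u um.
have m_lt : m < k by rewrite -um (leq_trans _ (ltn_ord u)).
have : g (Ordinal m_lt) < g u by rewrite g_mono /= um.
exact: leq_ltn_trans (IH (Ordinal m_lt) erefl).
Qed.

Lemma ord_mono_id k (g : 'I_k -> 'I_k) : {mono g : u v / u < v} -> g =1 id.
Proof.
move=> g_mono; have g_inj : injective g.
  move=> u v e; apply/val_inj.
  by case: (ltngtP u v) => // lt; move: lt; rewrite -g_mono e ltnn.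
have ginv_mono : {mono (perm g_inj)^-1%g : u v / u < v}.
  by move=> u v; rewrite -g_mono -!(permE g_inj) !permKV.
move=> u; apply/val_inj/eqP; rewrite eqn_leq (leq_ord_mono g_mono) andbT.
by have := leq_ord_mono ginv_mono (g u); rewrite -(permE g_inj) permK.
Qed.

Lemma perm_wpos_order_inj k (tau tau' : 'S_k) :
  (forall i j, 1 <= i <= k -> 1 <= j <= k ->
     (wpos tau i < wpos tau j) = (wpos tau' i < wpos tau' j)) -> tau = tau'.
Proof.
move=> same_order.
have inv_mono : {mono (tau'^-1)%g \o tau : u v / u < v}.
  move=> u v /=; have := same_order (tau u).+1 (tau v).+1.
  by rewrite !wpos_ord !permK !ltnS !ltn_ord => ->.
apply: invg_inj; apply/permP => o.
by rewrite -[LHS](ord_mono_id inv_mono) /= permKV.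
Qed.

Local Open Scope classical_set_scope.
Local Open Scope ring_scope.

Section RunIntervals.
Variables (R : realType) (n : nat) (lam : seq nat).
Hypothesis n_ge2 : (2 <= n)%N.

Local Notation ext := (is_extremal lam n).
Local Notation next := (next_ext lam n).
Local Notation in_run := (in_run n lam).

Definition run_itv (a : nat) : set R :=
  [set t : R | ((a%:R - 1) / n%:R < t) && (t < ((next a)%:R - 1) / n%:R)].

Definition in_cell (c : nat) (x : R) : bool := ((c%:R - 1) / n%:R < x) && (x < c%:R / n%:R).

Lemma U_upE : U_up lam n = \bigcup_(a in [set a : nat | is_valley lam n a]) run_itv a.
Proof. by []. Qed.

Lemma U_downE : U_down lam n = \bigcup_(a in [set a : nat | is_peak lam n a]) run_itv a.
Proof. by []. Qed.

Lemma ltr_divn (x y : R) : (x / n%:R < y / n%:R) = (x < y).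
Proof. by rewrite ltr_pM2r // invr_gt0 ltr0n (leq_trans _ n_ge2). Qed.

Lemma ler_divn (x y : R) : (x / n%:R <= y / n%:R) = (x <= y).
Proof. by rewrite ler_pM2r // invr_gt0 ltr0n (leq_trans _ n_ge2). Qed.

Lemma ltr_natB1 (a b : nat) : ((a%:R - 1 : R) < b%:R - 1) = (a < b)%N.
Proof. by rewrite ltrD2r ltr_nat. Qed.

Lemma ltr_natB1l (a b : nat) : ((a%:R - 1 : R) < b%:R) = (a <= b)%N.
Proof. by rewrite ltrBlDr natr1 ltr_nat ltnS. Qed.

Lemma ler_natB1r (a b : nat) : ((a%:R : R) <= b%:R - 1) = (a < b)%N.
Proof. by rewrite lerBrDr natr1 ler_nat. Qed.

Lemma in_cell_lt c c' (x x' : R) : (c < c')%N -> in_cell c x -> in_cell c' x' -> x < x'.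
Proof.
move=> cc' /andP[_ xc] /andP[c'x' _]; apply: lt_trans xc (le_lt_trans _ c'x').
by rewrite ler_divn ler_natB1r.
Qed.

Lemma offgrid_cell (x : R) (L h : nat) : L%:R / n%:R <= x -> x <= (L + h)%:R / n%:R ->
  (forall m : nat, x != m%:R / n%:R) -> exists2 c, (L < c <= L + h)%N & in_cell c x.
Proof.
elim: h => [|h IH] Lx xLh offgrid.
  rewrite addn0 in xLh; have x_eq : x = L%:R / n%:R by apply/le_anti; rewrite xLh Lx.
  by move: (offgrid L); rewrite x_eq eqxx.
case: (leP x ((L + h)%:R / n%:R)) => x_le.
  have [c /andP[Lc ch] x_c] := IH Lx x_le offgrid.
  by exists c; rewrite // Lc (leq_trans ch) ?leq_add2l.
exists (L + h.+1)%N; first by rewrite leqnn andbT addnS ltnS leq_addr.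
by rewrite /in_cell [x < _]lt_neqAle offgrid xLh addnS -natr1 addrK x_le.
Qed.

Lemma boundary_notin_run_itv a b : ext a -> (ext b /\ (b <= n)%N) \/ b = n.+1 ->
  ~ run_itv a ((b%:R - 1) / n%:R).
Proof.
move=> ea b_bound; rewrite /run_itv /= !ltr_divn !ltr_natB1 => /andP[ab b_next].
case: b_bound => [[eb bn]|b_eq]; first by have := next_ext_min eb ab bn; rewrite leqNgt b_next.
by have := next_ext_le n lam a; rewrite leqNgt -b_eq b_next.
Qed.

Lemma run_itv_interval a : is_interval (run_itv a).
Proof.
move=> x y /andP[ax _] /andP[_ y_next] z /andP[xz zy].
by rewrite /run_itv /= (lt_le_trans ax xz) (le_lt_trans zy y_next).
Qed.

(* A component is an interval: if it left run_itv a, it would contain one of the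
   boundary points (a-1)/n, (next a - 1)/n, which lie in no run interval. *)
Lemma same_comp_run_itvP (E : nat -> bool) (E_ext : forall a, E a -> ext a) (u v : R) :
  same_comp (\bigcup_(a in [set a : nat | E a]) run_itv a) u v <->
  exists a, [/\ E a, run_itv a u & run_itv a v].
Proof.
split; last first.
  case=> a [Ea au av]; exists (run_itv a) => //; split => //; first by move=> x ax; exists a.
  exact/connected_intervalP/run_itv_interval.
case=> C [Cu C_sub C_conn] Cv; have C_itv := (connected_intervalP C).1 C_conn.
have [a Ea au] := C_sub u Cu; exists a; split => //.
have ea := E_ext _ Ea; case/andP: (au) => a_u u_next.
rewrite /run_itv /=; apply/negPn/negP; rewrite negb_and -!leNgt => /orP[va|next_v].
  have Ca : C ((a%:R - 1) / n%:R) by apply: (C_itv v u) => //; rewrite va ltW.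
  have [a' Ea' a'a] := C_sub _ Ca; apply: (boundary_notin_run_itv (E_ext _ Ea') _ a'a).
  by left; rewrite ea; case/andP: (extremal_range ea).
have Cnext : C (((next a)%:R - 1) / n%:R) by apply: (C_itv u v) => //; rewrite next_v ltW.
have [a' Ea' a'next] := C_sub _ Cnext; apply: (boundary_notin_run_itv (E_ext _ Ea') _ a'next).
have := next_ext_le n lam a; rewrite leq_eqVlt ltnS => /orP[/eqP->|next_le]; [by right | left].
by rewrite next_extremal.
Qed.

Lemma run_itv_cellE a c (x : R) : (1 <= a)%N -> in_cell c x ->
  run_itv a x <-> (a <= c)%N /\ (c < next a)%N.
Proof.
move=> a_ge1 /andP[cx xc]; split.
  case/andP => ax x_next; split; first by rewrite -ltr_natB1l -ltr_divn (lt_trans ax xc).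
  by rewrite -ltr_natB1 -ltr_divn (lt_trans cx x_next).
case=> ac c_next; apply/andP; split.
  by apply: le_lt_trans cx; rewrite ler_divn lerD2r ler_nat.
by apply: lt_le_trans xc _; rewrite ler_divn ler_natB1r.
Qed.

Lemma run_itv_cell_run a a0 c (x : R) : in_cell c x -> in_run a0 c -> (c <= n)%N -> ext a ->
  run_itv a x <-> a = a0.
Proof.
move=> xc a0c cn ea; have /andP[a_ge1 _] := extremal_range ea.
rewrite (run_itv_cellE a_ge1 xc); split => [[ac c_next]|->]; last by case/and3P: a0c => _ -> ->.
by apply: run_unique a0c cn; rewrite /in_run ea ac.
Qed.

Lemma same_comp_cells (E : nat -> bool) (E_ext : forall a, E a -> ext a) a b c d (x y : R) :
  in_cell c x -> in_run a c -> (c <= n)%N -> in_cell d y -> in_run b d -> (d <= n)%N ->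
  same_comp (\bigcup_(e in [set e : nat | E e]) run_itv e) x y <-> E a /\ a = b.
Proof.
move=> xc ac cn yd bd dn; rewrite same_comp_run_itvP //; split.
  case=> e [Ee ex ey]; have ee := E_ext _ Ee.
  move: ex ey; rewrite (run_itv_cell_run xc ac cn ee) (run_itv_cell_run yd bd dn ee).
  by move=> <- <-.
case=> Ea ab; rewrite -ab in bd; have ea := E_ext _ Ea.
exists a; split => //.
  exact/(run_itv_cell_run xc ac cn ea).
exact/(run_itv_cell_run yd bd dn ea).
Qed.

End RunIntervals.

Section PaintboxOfCells.
Variables (R : realType) (n : nat) (lam : seq nat) (s : 'S_n).
Hypotheses (n_ge2 : (2 <= n)%N) (lam_comp : is_composition lam n) (s_Omega : s \in Omega n lam).

Local Notation ext := (is_extremal lam n).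
Local Notation next := (next_ext lam n).
Local Notation in_run := (in_run n lam).
Local Notation in_cell := (@in_cell R n).

Definition in_slope_cell (p : nat) (x : R) : Prop :=
  exists2 c, (slope_x lam n p <= c <= slope_y lam n p)%N & in_cell c x.

Lemma slope_run_bounds p c a : (p <= n)%N ->
  (slope_x lam n p <= c <= slope_y lam n p)%N -> in_run a c -> (a <= p <= next a)%N.
Proof.
move=> pn /andP[sx_c c_sy] /and3P[ea ac c_next]; apply/andP; split.
  rewrite leqNgt; apply/negP => pa.
  have c_lt : (c < next p)%N.
    by rewrite (leq_ltn_trans c_sy) // ltn_predL (leq_ltn_trans _ (next_ext_gt lam pn)).
  have := next_ext_min ea pa (leq_trans ac (leq_trans c_sy (slope_y_le n lam p))).
  by rewrite leqNgt (leq_ltn_trans ac c_lt).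
rewrite leqNgt; apply/negP => next_p.
have := slope_x_gt (next_extremal (leq_trans (ltnW next_p) pn)) next_p.
by rewrite ltnNge (leq_trans sx_c (ltnW c_next)).
Qed.

Lemma in_slope_cell_run p (x : R) : (p <= n)%N -> in_slope_cell p x ->
  exists c a, [/\ in_cell c x, in_run a c, (c <= n)%N & (a <= p <= next a)%N].
Proof.
move=> pn [c c_slope xc]; have /andP[sx_c c_sy] := c_slope.
have c_le : (c <= n)%N := leq_trans c_sy (slope_y_le n lam p).
have c_in : (1 <= c <= n)%N by rewrite (leq_trans _ sx_c) ?c_le.
have [a ac] := run_exists n_ge2 lam_comp c_in.
by exists c, a; rewrite (slope_run_bounds pn c_slope ac).
Qed.

Lemma paintbox_letter_pair i j (x : nat -> R) : (1 <= i <= n)%N -> (1 <= j <= n)%N ->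
  in_slope_cell (wpos s i) (x i) -> in_slope_cell (wpos s j) (x j) ->
  (wpos s i < wpos s j)%N <->
  [\/ [/\ ~ same_comp (U_up lam n) (x i) (x j), ~ same_comp (U_down lam n) (x i) (x j) & x i < x j],
      same_comp (U_up lam n) (x i) (x j) /\ (i < j)%N
    | same_comp (U_down lam n) (x i) (x j) /\ (j < i)%N].
Proof.
move=> i_in j_in cell_i cell_j.
case: (eqVneq i j) => [<-|ij].
  by rewrite ltnn; split=> // -[[_ _]|[_]|[_]]; rewrite ?ltxx ?ltnn.
have /andP[_ p_le] := wpos_range s i_in; have /andP[_ q_le] := wpos_range s j_in.
have [ci [ai [xci ai_ci ci_le /andP[ai_p p_next]]]] := in_slope_cell_run p_le cell_i.
have [cj [aj [xcj aj_cj cj_le /andP[aj_q q_next]]]] := in_slope_cell_run q_le cell_j.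
have pq : wpos s i != wpos s j by apply: contra_neq ij; apply: wpos_inj.
have valley_ext a : is_valley lam n a -> ext a by move=> va; rewrite /is_extremal va orbT.
have peak_ext a : is_peak lam n a -> ext a by move=> pa; rewrite /is_extremal pa.
rewrite U_upE U_downE.
rewrite (propext (same_comp_cells n_ge2 valley_ext xci ai_ci ci_le xcj aj_cj cj_le)).
rewrite (propext (same_comp_cells n_ge2 peak_ext xci ai_ci ci_le xcj aj_cj cj_le)).
case: (ltngtP ai aj) => [lt|gt|ai_aj].
- have /andP[c_lt p_le_q] := in_run_ltn ai_ci aj_cj lt p_next aj_q.
  have -> : (wpos s i < wpos s j)%N by rewrite ltn_neqAle pq p_le_q.
  split=> // _; apply: Or31; split=> [[_ e]|[_ e]|]; try by rewrite e ltnn in lt.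
  exact: (in_cell_lt n_ge2 c_lt xci xcj).
- have /andP[c_lt q_le_p] := in_run_ltn aj_cj ai_ci gt q_next ai_p.
  have -> : (wpos s i < wpos s j)%N = false by rewrite ltnNge q_le_p.
  split=> // -[[_ _]|[[_ e] _]|[[_ e] _]]; try by rewrite e ltnn in gt.
  by rewrite ltNge (ltW (in_cell_lt n_ge2 c_lt xcj xci)).
- subst aj; have [i_le j_le] := (wval_wpos s i_in, wval_wpos s j_in).
  case/and3P: ai_ci => /orP[pa|va] _ _.
    rewrite (peak_run_ltE s_Omega pa ai_p aj_q p_next q_next p_le q_le) i_le j_le.
    have nva := peak_not_valley n_ge2 pa.
    split=> [ji|[[_ /(_ (conj pa erefl))]|[[va _]]|[]]] //; first exact: Or33.
    by rewrite va in nva.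
  rewrite (valley_run_ltE lam_comp s_Omega va ai_p aj_q p_next q_next p_le q_le) i_le j_le.
  have npa : ~~ is_peak lam n ai by apply: contraL va; apply: peak_not_valley.
  split=> [ij'|[[/(_ (conj va erefl))]|[]|[[pa _]]]] //; first exact: Or32.
  by rewrite pa in npa.
Qed.

Lemma paintbox_of_slope_cells k (x : nat -> R) (tau : 'S_k) : (1 <= k <= n)%N ->
  word tau = [seq a <- word s | (a <= k)%N] ->
  (forall i, (1 <= i <= k)%N -> in_slope_cell (wpos s i) (x i)) ->
  paintbox_is (U_up lam n) (U_down lam n) x tau.
Proof.
move=> /andP[_ k_le] w_tau x_cells i j i_in j_in.
have letter_in a : (1 <= a <= k)%N -> (1 <= a <= n)%N by case/andP=> -> /leq_trans->.
rewrite (restr_wpos_ltE k_le w_tau i_in j_in).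
exact: paintbox_letter_pair (letter_in _ i_in) (letter_in _ j_in) (x_cells _ i_in) (x_cells _ j_in).
Qed.

End PaintboxOfCells.

Section AveragedCoordinates.
Variables (R : realType) (d : measure_display) (T : measurableType d) (P : probability T R).

Lemma measurable_preimageT (X : T -> R) (A : set R) : measurable_fun setT X -> measurable A ->
  measurable (X @^-1` A).
Proof. by move=> mX mA; rewrite -[X @^-1` A]setTI; apply: mX. Qed.

Lemma uniform_negligible_preimage (X : T -> R) a b (A : set R) : is_uniform P X a b ->
  measurable A -> lebesgue_measure (A `&` [set t | a <= t <= b]) = 0%E -> P.-negligible (X @^-1` A).
Proof.
case=> mX X_law mA A0; apply/negligibleP; first exact: measurable_preimageT.
by have := X_law A mA; rewrite A0 mul0e.
Qed.

Lemma uniform_ae_mem (X : T -> R) a b : is_uniform P X a b ->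
  P.-negligible (~` [set t | a <= X t <= b]).
Proof.
move=> X_unif; apply: (uniform_negligible_preimage (A := ~` [set t | a <= t <= b])) X_unif _ _.
  apply: measurableC; have -> : [set t : R | a <= t <= b] = [set` `[a, b]].
    by apply/seteqP; split=> x; rewrite /= in_itv.
  exact: measurable_itv.
by rewrite setICl measure0.
Qed.

Lemma uniform_negligible_point (X : T -> R) a b (c : R) : is_uniform P X a b ->
  P.-negligible (X @^-1` [set c]).
Proof.
move=> X_unif; apply: uniform_negligible_preimage X_unif (measurable_set1 c) _.
have [c_in|c_out] := boolP (a <= c <= b).
  have -> : [set c] `&` [set t | a <= t <= b] = [set c].
    by apply/seteqP; split=> x /=; [case | move=> ->; split].
  exact: lebesgue_measure_set1.
have -> : [set c] `&` [set t | a <= t <= b] = set0.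
  by apply/seteqP; split=> x //= [-> c_in]; rewrite c_in in c_out.
exact: measure0.
Qed.

Lemma uniform_ae_offgrid (n : nat) (X : T -> R) a b : is_uniform P X a b ->
  P.-negligible (~` [set t | forall m : nat, X t != m%:R / n%:R]).
Proof.
move=> X_unif; apply: (negligibleS (A := \bigcup_m (X @^-1` [set m%:R / n%:R]))).
  by move=> t /= /existsNP [m /negP]; rewrite negbK => /eqP; exists m.
by apply: negligible_bigcup => m; exact: uniform_negligible_point X_unif.
Qed.

Lemma measurable_set_prop (Q : Prop) : measurable [set _ : T | Q].
Proof.
case: (pselect Q) => q.
  by have -> : [set _ : T | Q] = setT by apply/seteqP; split.
by have -> : [set _ : T | Q] = set0 by apply/seteqP; split.
Qed.

Lemma measurable_set_implb (b : bool) (A : T -> Prop) :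
  measurable [set t | A t] -> measurable [set t | b -> A t].
Proof.
case: b => mA; last by have -> : [set t | false -> A t] = setT by apply/seteqP; split.
by have -> : [set t | true -> A t] = [set t | A t] by apply/seteqP; split => t /=; auto.
Qed.

Lemma measurable_set_iffb (b : bool) (A : T -> Prop) :
  measurable [set t | A t] -> measurable [set t | b <-> A t].
Proof.
case: b => mA.
  have -> : [set t | true <-> A t] = [set t | A t].
    by apply/seteqP; split=> t /= h; [exact/h | split].
  exact: mA.
have -> : [set t | false <-> A t] = ~` [set t | A t].
  by apply/seteqP; split => t /=; [case=> _ h /h | move=> h; split => // /h].
exact: measurableC.
Qed.

Lemma measurable_set_ltr (f g : T -> R) : measurable_fun setT f -> measurable_fun setT g ->
  measurable [set t | f t < g t].
Proof.
move=> mf mg; have mtrue : measurable [set true] by [].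
have := measurable_realfun.measurable_fun_ltr mf mg measurableT mtrue.
by rewrite setTI; congr measurable; apply/seteqP; split => t /=.
Qed.

Variables (n : nat) (lam : seq nat).
Hypotheses (n_ge2 : (2 <= n)%N) (lam_comp : is_composition lam n).

Local Notation run_itv := (@run_itv R n lam).

Definition generic_coords (s : 'S_n) (X : 'I_n -> T -> R) (t : T) : Prop :=
  forall o : 'I_n,
    ((slope_x lam n (wpos s o.+1))%:R - 1) / n%:R <= X o t
      <= (slope_y lam n (wpos s o.+1))%:R / n%:R
    /\ forall m : nat, X o t != m%:R / n%:R.

Lemma generic_coords_ae (s : 'S_n) (X : 'I_n -> T -> R) : averaged_coords lam s P X ->
  P.-negligible (~` [set t | generic_coords s X t]).
Proof.
case=> _ X_unif.
pose bad (o : 'I_n) : set T :=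
  ~` [set t | ((slope_x lam n (wpos s o.+1))%:R - 1) / n%:R <= X o t
                <= (slope_y lam n (wpos s o.+1))%:R / n%:R]
  `|` ~` [set t | forall m : nat, X o t != m%:R / n%:R].
(* Indexed by nat, for which negligible_bigcup is stated. *)
apply: (negligibleS (A := \bigcup_(r : nat) oapp bad set0 (insub r))).
  move=> t /= /existsNP [j /not_andP j_bad]; exists (val j) => //; rewrite valK /bad.
  by case: j_bad; [left | right].
apply: negligible_bigcup => r; case: insubP => [j _ _ /=|_]; last exact: negligible_set0.
by apply: negligibleU; [exact: uniform_ae_mem (X_unif j) | exact: uniform_ae_offgrid (X_unif j)].
Qed.

Lemma generic_in_slope_cell (s : 'S_n) (X : 'I_n -> T -> R) t i : generic_coords s X t ->
  (1 <= i <= n)%N -> in_slope_cell n lam (wpos s i) (xat X t i).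
Proof.
move=> X_generic /andP[i_ge1 i_le]; have i_lt : (i.-1 < n)%N by rewrite prednK.
have [/andP[lo hi] offgrid] := X_generic (Ordinal i_lt).
rewrite /= prednK // in lo hi; rewrite /xat insubT /=.
set sx := slope_x lam n (wpos s i) in lo *; set sy := slope_y lam n (wpos s i) in hi *.
(* The range [(sx - 1)/n, sy/n] of the uniform is the union of the cells sx, ..., sy. *)
have sx_ge1 : (1 <= sx)%N by [].
have sx_sy : (sx.-1 <= sy)%N.
  have := le_trans lo hi; rewrite (ler_divn n_ge2).
  by case: (sx) sx_ge1 => // m _; rewrite -natr1 addrK ler_nat.
have lo' : (sx.-1)%:R / n%:R <= X (Ordinal i_lt) t.
  by case: (sx) sx_ge1 lo => // m _; rewrite /= -natr1 addrK.
have hi' : X (Ordinal i_lt) t <= (sx.-1 + (sy - sx.-1))%:R / n%:R by rewrite subnKC.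
have [c /andP[sx_c c_sy] xc] := offgrid_cell lo' hi' offgrid.
rewrite (subnKC sx_sy) in c_sy.
by exists c; rewrite // -/sx -/sy -(prednK sx_ge1) sx_c.
Qed.

Lemma paintbox_restr_ae (k : nat) (s : 'S_n) (X : 'I_n -> T -> R) :
  (1 <= k <= n)%N -> s \in Omega n lam -> averaged_coords lam s P X ->
  {ae P, forall t, exists tau : 'S_k,
     restr_is s tau /\ paintbox_is (@U_up R lam n) (@U_down R lam n) (xat X t) tau}.
Proof.
move=> k_bound s_Omega X_avg; have [tau w_tau] := restr_exists s (proj2 (andP k_bound)).
apply: (negligibleS (A := ~` [set t | generic_coords s X t])); last exact: generic_coords_ae.
apply: subsetC => t X_generic /=; exists tau; split; first by rewrite /restr_is w_tau.
apply: (paintbox_of_slope_cells n_ge2 lam_comp s_Omega k_bound w_tau) => i /andP[i_ge1 i_le].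
by apply: generic_in_slope_cell; rewrite ?i_ge1 ?(leq_trans i_le (proj2 (andP k_bound))).
Qed.

Lemma measurable_xat (X : 'I_n -> T -> R) (i : nat) : (forall o, measurable_fun setT (X o)) ->
  measurable_fun setT (fun t => xat X t i).
Proof.
by move=> mX; rewrite /xat; case: (insub i.-1) => [j|] /=; [exact: mX | exact: measurable_cst].
Qed.

Lemma measurable_run_itv (a : nat) : measurable (run_itv a).
Proof.
have -> : run_itv a = [set` `](a%:R - 1) / n%:R, ((next_ext lam n a)%:R - 1) / n%:R[].
  by apply/seteqP; split => x /=; rewrite in_itv.
exact: measurable_itv.
Qed.

Lemma measurable_same_comp (E : nat -> bool) (E_ext : forall a, E a -> is_extremal lam n a)
    (f g : T -> R) : measurable_fun setT f -> measurable_fun setT g ->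
  measurable [set t | same_comp (\bigcup_(a in [set a : nat | E a]) run_itv a) (f t) (g t)].
Proof.
move=> mf mg.
have -> : [set t | same_comp (\bigcup_(a in [set a : nat | E a]) run_itv a) (f t) (g t)] =
    \bigcup_a ([set _ : T | E a] `&` (f @^-1` run_itv a) `&` (g @^-1` run_itv a)).
  apply/seteqP; split => t /=.
    by move/(same_comp_run_itvP n_ge2 E_ext) => [a [Ea fa ga]]; exists a.
  by move=> [a _ [[Ea fa] ga]]; apply/(same_comp_run_itvP n_ge2 E_ext); exists a.
apply: bigcupT_measurable => a; apply: measurableI; first apply: measurableI.
- exact: measurable_set_prop.
- exact: measurable_preimageT (measurable_run_itv a).
- exact: measurable_preimageT (measurable_run_itv a).
Qed.

Lemma measurable_paintbox_clause (A B C D E : T -> Prop) :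
  measurable [set t | A t] -> measurable [set t | B t] -> measurable [set t | C t] ->
  measurable [set t | D t] -> measurable [set t | E t] ->
  measurable [set t | [\/ [/\ ~ A t, ~ B t & C t], A t /\ D t | B t /\ E t]].
Proof.
move=> mA mB mC mD mE.
have -> : [set t | [\/ [/\ ~ A t, ~ B t & C t], A t /\ D t | B t /\ E t]] =
    (~` [set t | A t] `&` ~` [set t | B t] `&` [set t | C t]) `|` ([set t | A t] `&` [set t | D t])
    `|` ([set t | B t] `&` [set t | E t]).
  apply/seteqP; split => t /=.
    by case=> [[? ? ?]|[? ?]|[? ?]]; [left; left | left; right | right].
  by case=> [[[[? ?] ?]|[? ?]]|[? ?]]; [apply: Or31 | apply: Or32 | apply: Or33].
by apply: measurableU; first apply: measurableU; apply: measurableI => //; apply: measurableI;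
  exact: measurableC.
Qed.

Lemma measurable_paintbox_is (k : nat) (tau : 'S_k) (X : 'I_n -> T -> R) :
  (forall o, measurable_fun setT (X o)) ->
  measurable [set t | paintbox_is (@U_up R lam n) (@U_down R lam n) (xat X t) tau].
Proof.
move=> mX.
have -> : [set t | paintbox_is (@U_up R lam n) (@U_down R lam n) (xat X t) tau] =
  \bigcap_i \bigcap_j [set t | (1 <= i <= k)%N -> (1 <= j <= k)%N ->
     ((wpos tau i < wpos tau j)%N <->
     [\/ [/\ ~ same_comp (U_up lam n) (xat X t i) (xat X t j),
             ~ same_comp (U_down lam n) (xat X t i) (xat X t j) & xat X t i < xat X t j],
         same_comp (U_up lam n) (xat X t i) (xat X t j) /\ (i < j)%N
       | same_comp (U_down lam n) (xat X t i) (xat X t j) /\ (j < i)%N])].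
  by apply/seteqP; split => t /= pb_t => [i _ j _|i j]; exact: pb_t.
apply: bigcapT_measurable => i; apply: bigcapT_measurable => j.
apply/measurable_set_implb/measurable_set_implb/measurable_set_iffb.
have [mi mj] := (measurable_xat i mX, measurable_xat j mX).
apply: measurable_paintbox_clause; rewrite ?U_upE ?U_downE; try exact: measurable_set_prop.
- by apply: measurable_same_comp => // a va; rewrite /is_extremal va orbT.
- by apply: measurable_same_comp => // a pa; rewrite /is_extremal pa.
- exact: measurable_set_ltr.
Qed.

Lemma paintbox_is_unique (Uu Ud : set R) (x : nat -> R) (k : nat) (tau tau' : 'S_k) :
  paintbox_is Uu Ud x tau -> paintbox_is Uu Ud x tau' -> tau = tau'.
Proof.
move=> pb pb'; apply: perm_wpos_order_inj => i j i_in j_in.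
by apply/idP/idP => [/(pb i j i_in j_in)/(pb' i j i_in j_in)
  |/(pb' i j i_in j_in)/(pb i j i_in j_in)].
Qed.

Lemma prob_paintbox_is (k : nat) (s : 'S_n) (X : 'I_n -> T -> R) (tau : 'S_k) :
  (1 <= k <= n)%N -> s \in Omega n lam -> averaged_coords lam s P X ->
  P [set t | paintbox_is (@U_up R lam n) (@U_down R lam n) (xat X t) tau] =
  ((restr_is s tau : nat)%:R)%:E.
Proof.
move=> k_bound s_Omega X_avg.
have mX o : measurable_fun setT (X o) by case: X_avg => _ /(_ o) [].
have mS := measurable_paintbox_is tau mX.
have ae := paintbox_restr_ae k_bound s_Omega X_avg.
case: (boolP (restr_is s tau)) => restr_tau /=.
  have neg : P.-negligible (~` [set t | paintbox_is (U_up lam n) (U_down lam n) (xat X t) tau]).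
    apply: negligibleS ae; apply: subsetC => t /= [tau' [restr_tau' pb']].
    suff -> : tau = tau' by [].
    by apply: word_inj; move/eqP: restr_tau => ->; move/eqP: restr_tau' => ->.
  have := probability_setC P (measurableC mS); rewrite setCK.
  by rewrite (measure_negligible (measurableC mS) neg) sube0.
have neg : P.-negligible [set t | paintbox_is (U_up lam n) (U_down lam n) (xat X t) tau].
  apply: negligibleS ae => t /= pb [tau' [restr_tau' pb']].
  by rewrite (paintbox_is_unique pb pb') restr_tau' in restr_tau.
by rewrite (measure_negligible mS neg).
Qed.

End AveragedCoordinates.

Unset Implicit Arguments.

Theorem proposition12 (R : realType) (d : measure_display) (T : measurableType d)
    (P : probability T R) (n : nat) (lam : seq nat) :
  (2 <= n)%N -> is_composition lam n ->
  (* for each k and each s in Omega_lam, almost surely sigma_U(xi_1(s),...,xi_k(s)) = s_{|k} *)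
  (forall (k : nat) (s : 'S_n) (X : 'I_n -> T -> R),
     (1 <= k <= n)%N -> s \in Omega n lam -> averaged_coords lam s P X ->
     {ae P, forall t, exists tau : 'S_k,
        restr_is s tau /\ paintbox_is (@U_up R lam n) (@U_down R lam n) (xat X t) tau})
  /\
  (* law equality: with sigma_lam uniform on Omega_lam, drawn independently of the
     uniforms, P(sigma_U(xi^lam_1..xi^lam_k) = tau) = P((sigma_lam)_{|k} = tau) *)
  (forall (k : nat) (X : 'S_n -> 'I_n -> T -> R),
     (1 <= k <= n)%N ->
     (forall s, s \in Omega n lam -> averaged_coords lam s P (X s)) ->
     forall tau : 'S_k,
       (((#|Omega n lam|%:R)^-1)%:E *
          \sum_(s in Omega n lam)
             P [set t | paintbox_is (@U_up R lam n) (@U_down R lam n) (xat (X s) t) tau])%E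
       = ((#|[set s in Omega n lam | restr_is s tau]|%:R) / (#|Omega n lam|%:R))%:E).
Proof.
move=> n_ge2 lam_comp; split=> [k s X|k X k_bound X_avg tau].
  exact: paintbox_restr_ae.
rewrite (eq_bigr (fun s => ((restr_is s tau : nat)%:R)%:E)) => [|s s_Omega]; last
  exact: prob_paintbox_is (X_avg s s_Omega).
rewrite sumEFin -EFinM mulrC -natr_sum -big_mkcondr /= sum1_card.
by congr ((_%:R / _)%:E); apply: eq_card => s; rewrite inE.
Qed.
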